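(* Let $T$ be Takagi's function on $[0,1]$, $T(x)=\sum_{n=1}^\infty 2^{-n}\phi^{(n)}(x)$, with $\phi(x)=2x$ on $[0,1/2]$, $\phi(x)=2-2x$ on $[1/2,1]$. Let $x\in[0,1)$ with binary expansion $x=\sum_{k\ge1}2^{-k}\varepsilon_k$ (for dyadic $x$, the expansion eventually all zeros), and suppose $d_1(x):=\lim_{n\to\infty}\frac1n\sum_{k=1}^n\varepsilon_k$ exists; set $d_0(x)=1-d_1(x)$. Let $b_1<b_2<\cdots$ enumerate the indices $k$ with $\varepsilon_k=0$. (i) If $d_1(x)<1$, then $\displaystyle\lim_{h\downarrow0}\frac{T(x+h)-T(x)}{h\log_2(1/|h|)}=d_0(x)-d_1(x)$. (ii) If $d_1(x)=1$, then $\displaystyle\lim_{h\downarrow0}\frac{T(x+h)-T(x)}{h\log_2(1/|h|)}$ exists if and only if $b_{n+1}/b_n\to1$, in which case the limit equals $-1$.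
   Context: For non-dyadic $x$, $\{b_n\}$ coincides with the sequence determined by $1-x=\sum_{n\ge1}2^{-b_n}$. *)

From Stdlib Require Import Reals Lra ZArith.
From Coquelicot Require Import Coquelicot.
Open Scope R_scope.

Definition phi (x : R) : R := if Rle_dec x (1/2) then 2 * x else 2 - 2 * x.

Fixpoint phi_iter (n : nat) (x : R) : R :=
  match n with
  | O => x
  | S m => phi (phi_iter m x)
  end.

Definition Takagi (x : R) : R :=
  Series (fun n : nat => (/ 2) ^ (S n) * phi_iter (S n) x).

(* k-th binary digit of x (k >= 1): eps_k = floor(2^k x) mod 2.
   For dyadic x this yields the expansion ending in all zeros. *)
Definition bdigit (k : nat) (x : R) : nat :=
  if Z.odd (Int_part (x * 2 ^ k)) then 1%nat else 0%nat.

Definition digit_avg (x : R) (n : nat) : R :=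
  (sum_f_R0 (fun k => INR (bdigit (S k) x)) (pred n)) / INR n.

Definition log2 (y : R) : R := ln y / ln 2.

Definition takagi_quot (x h : R) : R :=
  (Takagi (x + h) - Takagi x) / (h * log2 (1 / Rabs h)).

From Stdlib Require Import Reals ZArith Lra Lia.
From Coquelicot Require Import Coquelicot.
Open Scope R_scope.

(* With dist_Z the distance to the nearest integer, T(y) = sum_n 2^-n dist_Z (2^n y) on
   [0,1].  The sum of the first m terms is affine on each dyadic interval of length 2^-m,
   with slope m - 2 S_m on the interval containing x (S_m = eps_1 + ... + eps_m), and the
   remaining terms move by at most 2^-m.  Passing into the next interval changes the slope
   by about twice the length r_m of the final run of ones in eps_1 ... eps_m, so for
   2^-(m+1) < h <= 2^-m the quotient is (m - 2 S_m)/m up to O((r_m + 1)/m).  Hence the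
   limit is d0 - d1 as soon as r_m = o(m); this always holds when d1 < 1 (the number of
   zeros is constant along the run) and, when d1 = 1, is equivalent to b_{n+1}/b_n -> 1.
   Conversely, when d1 = 1 the quotient tends to -1 along h = 2^-b_n (where r = 0), while
   probing the middle of the dyadic interval that follows a run of ones of length r pushes
   it above -1 by about r/m. *)

(** * Takagi's function through the distance to the nearest integer *)

Definition dist_Z (t : R) : R := Rabs (t - IZR (Int_part (t + /2))).

Lemma dist_Z_nearest t : Rabs (t - IZR (Int_part (t + /2))) <= /2.
Proof. destruct (base_Int_part (t + /2)). apply Rabs_le; lra. Qed.

Lemma dist_Z_eq t q : Rabs (t - IZR q) <= /2 -> dist_Z t = Rabs (t - IZR q).
Proof.
  unfold dist_Z; destruct (base_Int_part (t + /2)) as [H1 H2].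
  set (p := Int_part (t + /2)) in *; intros Hq%Rabs_le_between.
  assert (p = q \/ p = q + 1)%Z as [->| ->].
  { assert (Hp : IZR q - 1 < IZR p <= IZR q + 1) by lra.
    rewrite <- minus_IZR, <- plus_IZR in Hp.
    destruct Hp as [?%lt_IZR ?%le_IZR]; lia. }
  - reflexivity.
  - (* t is a half-integer, equidistant from q and q + 1 *)
    rewrite plus_IZR in *; simpl in *.
    replace t with (IZR q + /2) by lra.
    rewrite Rabs_left1, Rabs_pos_eq; lra.
Qed.

Lemma dist_Z_bounds t : 0 <= dist_Z t <= /2.
Proof. split; [apply Rabs_pos | apply dist_Z_nearest]. Qed.

Lemma dist_Z_shift t k : dist_Z (t + IZR k) = dist_Z t.
Proof.
  assert (E : t + IZR k - IZR (Int_part (t + /2) + k) = t - IZR (Int_part (t + /2)))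
    by (rewrite plus_IZR; ring).
  rewrite (dist_Z_eq _ (Int_part (t + /2) + k)), E by (rewrite E; apply dist_Z_nearest).
  reflexivity.
Qed.

Lemma dist_Z_opp t : dist_Z (- t) = dist_Z t.
Proof.
  assert (E : - t - IZR (- Int_part (t + /2)) = - (t - IZR (Int_part (t + /2))))
    by (rewrite opp_IZR; ring).
  rewrite (dist_Z_eq _ (- Int_part (t + /2))), E, Rabs_Ropp
    by (rewrite E, Rabs_Ropp; apply dist_Z_nearest).
  reflexivity.
Qed.

Lemma dist_Z_double t : dist_Z (2 * t) = dist_Z (2 * dist_Z t).
Proof.
  unfold dist_Z at 3; set (s := t - IZR (Int_part (t + /2))).
  replace (2 * t) with (2 * s + IZR (2 * Int_part (t + /2)))
    by (unfold s; rewrite mult_IZR; simpl; ring).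
  rewrite dist_Z_shift.
  destruct (Rle_dec 0 s).
  - rewrite Rabs_pos_eq; auto.
  - rewrite Rabs_left by lra; rewrite <- dist_Z_opp; f_equal; ring.
Qed.

Lemma phi_dist_Z y : 0 <= y <= 1 -> phi y = 2 * dist_Z y.
Proof.
  intros Hy; unfold phi; destruct (Rle_dec y (1/2)).
  - rewrite (dist_Z_eq y 0); rewrite Rminus_0_r, Rabs_pos_eq; lra.
  - rewrite (dist_Z_eq y 1); rewrite Rabs_left1; lra.
Qed.

Lemma phi_iter_dist_Z n y : 0 <= y <= 1 -> phi_iter (S n) y = 2 * dist_Z (2 ^ n * y).
Proof.
  intros Hy; induction n as [|n IH].
  - simpl; rewrite Rmult_1_l; apply phi_dist_Z; auto.
  - change (phi_iter (S (S n)) y) with (phi (phi_iter (S n) y)).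
    rewrite IH, phi_dist_Z by (pose proof (dist_Z_bounds (2 ^ n * y)); lra).
    rewrite <- dist_Z_double; simpl; do 2 f_equal; ring.
Qed.

Lemma inv2_pow_mul m : (/2) ^ m * 2 ^ m = 1.
Proof. rewrite <- Rpow_mult_distr, Rinv_l by lra; apply pow1. Qed.

Lemma pow2_pos m : 0 < 2 ^ m.
Proof. apply pow_lt; lra. Qed.

Lemma inv2_pow_pos m : 0 < (/2) ^ m.
Proof. apply pow_lt; lra. Qed.

Definition takagi_ext (y : R) : R := Series (fun n => (/2) ^ n * dist_Z (2 ^ n * y)).

Lemma ex_series_takagi_ext y : ex_series (fun n => (/2) ^ n * dist_Z (2 ^ n * y)).
Proof.
  apply (@ex_series_le R_AbsRing R_CompleteNormedModule _ (fun n => (/2) ^ n)).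
  - intros n; change (Rabs ((/2) ^ n * dist_Z (2 ^ n * y)) <= (/2) ^ n).
    pose proof (dist_Z_bounds (2 ^ n * y)); pose proof (inv2_pow_pos n).
    rewrite Rabs_pos_eq; nra.
  - apply ex_series_geom; rewrite Rabs_pos_eq; lra.
Qed.

Lemma Takagi_eq_takagi_ext y : 0 <= y <= 1 -> Takagi y = takagi_ext y.
Proof.
  intros Hy; apply Series_ext; intros n.
  rewrite phi_iter_dist_Z by auto; simpl; field.
Qed.

Lemma takagi_ext_bounds y : 0 <= takagi_ext y <= 1.
Proof.
  assert (Hterm : forall n, 0 <= (/2) ^ n * dist_Z (2 ^ n * y) <= /2 * (/2) ^ n).
  { intros n; pose proof (dist_Z_bounds (2 ^ n * y)); pose proof (inv2_pow_pos n); nra. }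
  split.
  - replace 0 with (Series (fun n => 0 * ((/2) ^ n * dist_Z (2 ^ n * y))))
      by (rewrite Series_scal_l; ring).
    apply Series_le; [intros n; specialize (Hterm n); lra | apply ex_series_takagi_ext].
  - apply Rle_trans with (Series (fun n => /2 * (/2) ^ n)).
    + apply Series_le; [apply Hterm |].
      apply (ex_series_scal_l (/2) (fun n => (/2) ^ n)), ex_series_geom.
      rewrite Rabs_pos_eq; lra.
    + rewrite Series_scal_l, Series_geom by (rewrite Rabs_pos_eq; lra); lra.
Qed.

Fixpoint takagi_partial (m : nat) (y : R) : R :=
  match m with
  | O => 0
  | S k => takagi_partial k y + (/2) ^ k * dist_Z (2 ^ k * y)
  end.

Lemma takagi_ext_step y : takagi_ext y = dist_Z y + /2 * takagi_ext (2 * y).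
Proof.
  unfold takagi_ext at 1; rewrite Series_incr_1 by apply ex_series_takagi_ext.
  simpl; rewrite !Rmult_1_l; f_equal.
  unfold takagi_ext; rewrite <- Series_scal_l; apply Series_ext; intros k.
  replace (2 * 2 ^ k * y) with (2 ^ k * (2 * y)) by ring; ring.
Qed.

Lemma takagi_ext_split m y :
  takagi_ext y = takagi_partial m y + (/2) ^ m * takagi_ext (2 ^ m * y).
Proof.
  induction m as [|m IH]; simpl.
  - rewrite !Rmult_1_l; ring.
  - rewrite IH, (takagi_ext_step (2 ^ m * y)), !Rmult_assoc; ring.
Qed.

Lemma takagi_ext_diff_partial m a b :
  Rabs ((takagi_ext b - takagi_ext a) - (takagi_partial m b - takagi_partial m a))
    <= (/2) ^ m.
Proof.
  rewrite (takagi_ext_split m a), (takagi_ext_split m b).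
  replace (_ - _) with ((/2) ^ m * (takagi_ext (2 ^ m * b) - takagi_ext (2 ^ m * a)))
    by ring.
  rewrite Rabs_mult, Rabs_pos_eq by (apply pow_le; lra).
  pose proof (takagi_ext_bounds (2 ^ m * b)); pose proof (takagi_ext_bounds (2 ^ m * a)).
  pose proof (inv2_pow_pos m).
  assert (Rabs (takagi_ext (2 ^ m * b) - takagi_ext (2 ^ m * a)) <= 1)
    by (apply Rabs_le; lra).
  nra.
Qed.

(** * Slopes of the partial sums on dyadic intervals *)

Lemma Zdiv2_odd_eq a q b : a = (2 * q + Z.b2z b)%Z -> Z.div2 a = q /\ Z.odd a = b.
Proof.
  intros H; pose proof (Z.div2_odd a).
  destruct b, (Z.odd a); cbn [Z.b2z] in *; split; try reflexivity; lia.
Qed.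

Lemma IZR_div2_odd a : IZR a = 2 * IZR (Z.div2 a) + (if Z.odd a then 1 else 0).
Proof.
  rewrite (Z.div2_odd a) at 1; rewrite plus_IZR, mult_IZR.
  destruct (Z.odd a); simpl; ring.
Qed.

(* Slope of [takagi_partial m] on the dyadic interval [N 2^-m, (N+1) 2^-m]: each binary
   digit of N contributes -1 if it is a one and +1 if it is a zero. *)
Fixpoint dyadic_slope (m : nat) (N : Z) : R :=
  match m with
  | O => 0
  | S k => dyadic_slope k (Z.div2 N) + (if Z.odd N then -1 else 1)
  end.

Fixpoint trailing_ones (m : nat) (N : Z) : nat :=
  match m with
  | O => O
  | S k => if Z.odd N then S (trailing_ones k (Z.div2 N)) else O
  end.

Lemma takagi_partial_affine m : forall N y y',
  IZR N <= 2 ^ m * y <= IZR N + 1 -> IZR N <= 2 ^ m * y' <= IZR N + 1 ->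
  takagi_partial m y' - takagi_partial m y = (y' - y) * dyadic_slope m N.
Proof.
  induction m as [|m IH]; intros N y y' Hy Hy'; simpl takagi_partial; simpl dyadic_slope.
  - ring.
  - pose proof (IZR_div2_odd N) as HN; set (q := Z.div2 N) in *.
    simpl pow in Hy, Hy'; rewrite Rmult_assoc in Hy, Hy'.
    set (t := 2 ^ m * y) in *; set (t' := 2 ^ m * y') in *.
    assert (Hq : IZR q <= t <= IZR q + 1 /\ IZR q <= t' <= IZR q + 1)
      by (destruct (Z.odd N); lra).
    assert (Hdist : (/2) ^ m * (dist_Z t' - dist_Z t)
                    = (y' - y) * (if Z.odd N then -1 else 1)).
    { replace (y' - y) with ((/2) ^ m * (t' - t))
        by (unfold t, t'; rewrite <- (Rmult_1_l (y' - y)), <- (inv2_pow_mul m); ring).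
      destruct (Z.odd N).
      + (* both points lie in [q + 1/2, q + 1], where dist_Z t = q + 1 - t *)
        assert (Hq1 : IZR (q + 1) = IZR q + 1) by (rewrite plus_IZR; reflexivity).
        rewrite (dist_Z_eq t (q + 1)), (dist_Z_eq t' (q + 1)), Hq1
          by (rewrite Hq1; apply Rabs_le; lra).
        rewrite !Rabs_left1 by lra; ring.
      + rewrite (dist_Z_eq t q), (dist_Z_eq t' q) by (apply Rabs_le; lra).
        rewrite !Rabs_pos_eq by lra; ring. }
    replace (_ - _) with ((takagi_partial m y' - takagi_partial m y)
                         + (/2) ^ m * (dist_Z t' - dist_Z t)) by ring.
    rewrite Hdist, (IH q y y') by (unfold t, t' in Hq; tauto); ring.
Qed.

Lemma dyadic_slope_succ m : forall N,
  dyadic_slope m N + 2 * INR (trailing_ones m N) - 2 <= dyadic_slope m (N + 1)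
  <= dyadic_slope m N + 2 * INR (trailing_ones m N).
Proof.
  induction m as [|m IH]; intros N; simpl.
  - lra.
  - pose proof (Z.div2_odd N) as E; set (q := Z.div2 N) in *.
    destruct (Z.odd N).
    + destruct (Zdiv2_odd_eq (N + 1) (q + 1) false) as [-> ->]; [cbn [Z.b2z] in *; lia|].
      specialize (IH q); rewrite S_INR; lra.
    + destruct (Zdiv2_odd_eq (N + 1) q true) as [-> ->]; [cbn [Z.b2z] in *; lia|].
      simpl; lra.
Qed.

(** * Binary digits of x *)

Section Digits.

Variable x : R.

Definition dyadic_index (m : nat) : Z := Int_part (x * 2 ^ m).

Lemma dyadic_index_bounds m :
  IZR (dyadic_index m) <= 2 ^ m * x < IZR (dyadic_index m) + 1.
Proof.
  unfold dyadic_index; rewrite (Rmult_comm (2 ^ m) x).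
  destruct (base_Int_part (x * 2 ^ m)); lra.
Qed.

Lemma dyadic_index_div2 m : Z.div2 (dyadic_index (S m)) = dyadic_index m.
Proof.
  pose proof (dyadic_index_bounds m); pose proof (dyadic_index_bounds (S m)) as B.
  simpl pow in B; pose proof (Z.div2_odd (dyadic_index (S m))).
  assert (2 * dyadic_index m < dyadic_index (S m) + 1)%Z
    by (apply lt_IZR; rewrite plus_IZR, mult_IZR; simpl; lra).
  assert (dyadic_index (S m) < 2 * dyadic_index m + 2)%Z
    by (apply lt_IZR; rewrite plus_IZR, mult_IZR; simpl; lra).
  destruct (Z.odd (dyadic_index (S m))); cbn [Z.b2z] in *; lia.
Qed.

Lemma bdigit_dyadic_index k :
  bdigit k x = if Z.odd (dyadic_index k) then 1%nat else 0%nat.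
Proof. reflexivity. Qed.

Lemma bdigit_0_or_1 k : bdigit k x = 0%nat \/ bdigit k x = 1%nat.
Proof. rewrite bdigit_dyadic_index; destruct (Z.odd _); auto. Qed.

Fixpoint ones_count (m : nat) : R :=
  match m with O => 0 | S k => ones_count k + INR (bdigit (S k) x) end.

Lemma ones_count_bounds m : 0 <= ones_count m <= INR m.
Proof.
  induction m as [|m IH]; simpl ones_count; [simpl; lra|].
  rewrite S_INR; destruct (bdigit_0_or_1 (S m)) as [-> | ->]; simpl; lra.
Qed.

Lemma digit_avg_ones_count m : digit_avg x (S m) = ones_count (S m) / INR (S m).
Proof.
  unfold digit_avg; f_equal; simpl pred.
  induction m as [|m IH]; simpl; [ring | rewrite IH; reflexivity].
Qed.

Lemma dyadic_slope_index m : dyadic_slope m (dyadic_index m) = INR m - 2 * ones_count m.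
Proof.
  induction m as [|m IH]; simpl dyadic_slope; simpl ones_count; [simpl; ring|].
  rewrite dyadic_index_div2, IH, bdigit_dyadic_index, S_INR.
  destruct (Z.odd _); simpl; ring.
Qed.

(* Length of the final run of ones in eps_1, ..., eps_m. *)
Definition final_run (m : nat) : nat := trailing_ones m (dyadic_index m).

Lemma final_run_S m :
  final_run (S m) = if Z.odd (dyadic_index (S m)) then S (final_run m) else O.
Proof. unfold final_run; simpl; rewrite dyadic_index_div2; reflexivity. Qed.

Lemma final_run_le m : (final_run m <= m)%nat.
Proof.
  induction m; [reflexivity|].
  rewrite final_run_S; destruct (Z.odd _); lia.
Qed.

Lemma ones_count_final_run m :
  ones_count m = ones_count (m - final_run m) + INR (final_run m).
Proof.
  induction m as [|m IH]; [simpl; ring|].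
  rewrite final_run_S; simpl ones_count at 1; rewrite bdigit_dyadic_index.
  destruct (Z.odd (dyadic_index (S m))) eqn:Hodd.
  - rewrite Nat.sub_succ, IH at 1; rewrite (S_INR (final_run m)); simpl (INR 1); ring.
  - rewrite Nat.sub_0_r; simpl ones_count; rewrite bdigit_dyadic_index, Hodd.
    simpl (INR 0); ring.
Qed.

Lemma final_run_after_zero p m :
  bdigit p x = 0%nat -> (1 <= p <= m)%nat -> (p + final_run m <= m)%nat.
Proof.
  intros Hp; induction m as [|m IH]; intros Hm; [lia|].
  rewrite final_run_S; destruct (Nat.eq_dec p (S m)) as [->|].
  - rewrite bdigit_dyadic_index in Hp; destruct (Z.odd _); [discriminate | lia].
  - destruct (Z.odd _); [specialize (IH ltac:(lia)) |]; lia.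
Qed.

Lemma bdigit_before_final_run m :
  (final_run m < m)%nat -> bdigit (m - final_run m) x = 0%nat.
Proof.
  induction m as [|m IH]; intros H; [lia|].
  revert H; rewrite final_run_S.
  destruct (Z.odd (dyadic_index (S m))) eqn:Hodd; intros H.
  - rewrite Nat.sub_succ; apply IH; lia.
  - rewrite Nat.sub_0_r, bdigit_dyadic_index, Hodd; reflexivity.
Qed.

Lemma final_run_of_ones p m : (p <= m)%nat ->
  (forall i, (p < i <= m)%nat -> bdigit i x = 1%nat) -> (m - p <= final_run m)%nat.
Proof.
  induction m as [|m IH]; intros Hpm Hi; [lia|].
  rewrite final_run_S; destruct (Nat.eq_dec p (S m)); [lia|].
  assert (Hd := Hi (S m) ltac:(lia)); rewrite bdigit_dyadic_index in Hd.
  destruct (Z.odd _); [|discriminate].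
  specialize (IH ltac:(lia) ltac:(intros i ?; apply Hi; lia)); lia.
Qed.

End Digits.

(** * Increments of Takagi's function at x *)

Lemma log2_inv_bounds m h :
  (/2) ^ S m < h <= (/2) ^ m -> INR m <= log2 (1 / h) < INR m + 1.
Proof.
  intros [H1 H2]; pose proof (inv2_pow_pos (S m)); pose proof (inv2_pow_pos m).
  assert (Hln2 : 0 < ln 2) by (rewrite <- ln_1; apply ln_increasing; lra).
  assert (Hln : forall k, ln ((/2) ^ k) = - INR k * ln 2)
    by (intros k; rewrite ln_pow, ln_Rinv by lra; ring).
  assert (ln ((/2) ^ S m) < ln h) by (apply ln_increasing; lra).
  assert (ln h <= ln ((/2) ^ m)) by (apply ln_le; lra).
  rewrite !Hln, S_INR in *.
  assert (HL : log2 (1 / h) * ln 2 = - ln h)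
    by (unfold log2, Rdiv; rewrite Rmult_1_l, ln_Rinv by lra; field; lra).
  split; nra.
Qed.

Section Increments.

Variable x : R.

Definition right_end (m : nat) : R := (IZR (dyadic_index x m) + 1) * (/2) ^ m.

Lemma right_end_scaled m : 2 ^ m * right_end m = IZR (dyadic_index x m) + 1.
Proof.
  unfold right_end; rewrite Rmult_comm, Rmult_assoc, inv2_pow_mul; ring.
Qed.

Lemma takagi_partial_increment_cross m h : 0 < h ->
  IZR (dyadic_index x m) + 1 <= 2 ^ m * (x + h) <= IZR (dyadic_index x m) + 2 ->
  takagi_partial m (x + h) - takagi_partial m x
  = h * dyadic_slope m (dyadic_index x m)
    + (x + h - right_end m)
      * (dyadic_slope m (dyadic_index x m + 1) - dyadic_slope m (dyadic_index x m)).
Proof.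
  intros Hh H; pose proof (right_end_scaled m); pose proof (dyadic_index_bounds x m).
  replace (_ - _) with ((takagi_partial m (x + h) - takagi_partial m (right_end m))
                       + (takagi_partial m (right_end m) - takagi_partial m x)) by ring.
  rewrite (takagi_partial_affine m (dyadic_index x m + 1) (right_end m) (x + h)),
    (takagi_partial_affine m (dyadic_index x m) x (right_end m));
    rewrite ?plus_IZR; simpl IZR; lra || ring.
Qed.

Lemma takagi_partial_increment m h : 0 < h <= (/2) ^ m ->
  Rabs (takagi_partial m (x + h) - takagi_partial m x - h * dyadic_slope m (dyadic_index x m))
  <= h * (2 * INR (final_run x m) + 2).
Proof.
  intros Hh; pose proof (dyadic_index_bounds x m); pose proof (inv2_pow_mul m).
  pose proof (pow2_pos m); pose proof (pos_INR (final_run x m)).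
  assert (2 ^ m * h <= 1) by nra.
  destruct (Rle_dec (2 ^ m * (x + h)) (IZR (dyadic_index x m) + 1)).
  - rewrite (takagi_partial_affine m (dyadic_index x m) x (x + h)) by nra.
    replace (_ - _) with 0 by ring; rewrite Rabs_R0; nra.
  - rewrite takagi_partial_increment_cross by lra.
    pose proof (right_end_scaled m).
    assert (0 < x + h - right_end m <= h) by nra.
    pose proof (dyadic_slope_succ m (dyadic_index x m)).
    replace (_ - _) with ((x + h - right_end m)
      * (dyadic_slope m (dyadic_index x m + 1) - dyadic_slope m (dyadic_index x m))) by ring.
    rewrite Rabs_mult, Rabs_pos_eq by lra.
    apply Rmult_le_compat; try lra; [apply Rabs_pos | apply Rabs_le; unfold final_run in *; lra].
Qed.

Lemma takagi_ext_increment_upper m h : 0 < h <= (/2) ^ m ->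
  Rabs (takagi_ext (x + h) - takagi_ext x - h * dyadic_slope m (dyadic_index x m))
  <= h * (2 * INR (final_run x m) + 2) + (/2) ^ m.
Proof.
  intros Hh; pose proof (takagi_ext_diff_partial m x (x + h)).
  pose proof (takagi_partial_increment m h Hh).
  eapply Rle_trans; [|apply Rplus_le_compat; eassumption].
  rewrite Rplus_comm; eapply Rle_trans; [|apply Rabs_triang]; right; f_equal; ring.
Qed.

Lemma takagi_ext_increment_lower m h : 0 < h ->
  IZR (dyadic_index x m) + 1 <= 2 ^ m * (x + h) <= IZR (dyadic_index x m) + 2 ->
  h * dyadic_slope m (dyadic_index x m) + (x + h - right_end m) * (2 * INR (final_run x m) - 2)
    - (/2) ^ m <= takagi_ext (x + h) - takagi_ext x.
Proof.
  intros Hh H; pose proof (takagi_ext_diff_partial m x (x + h)) as Hdiff.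
  rewrite takagi_partial_increment_cross in Hdiff by lra; apply Rabs_le_between in Hdiff.
  pose proof (dyadic_slope_succ m (dyadic_index x m)).
  pose proof (right_end_scaled m); pose proof (dyadic_index_bounds x m); pose proof (pow2_pos m).
  assert (0 <= x + h - right_end m) by nra.
  unfold final_run in *; nra.
Qed.

Definition takagi_ext_quot (h : R) : R :=
  (takagi_ext (x + h) - takagi_ext x) / (h * log2 (1 / h)).

Lemma takagi_ext_quot_approx m h : (1 <= m)%nat -> (/2) ^ S m < h <= (/2) ^ m ->
  Rabs (takagi_ext_quot h - dyadic_slope m (dyadic_index x m) / INR m)
  <= (2 * INR (final_run x m) + 5) / INR m.
Proof.
  intros Hm Hh; pose proof (log2_inv_bounds m h Hh) as HL.
  pose proof (takagi_ext_increment_upper m h ltac:(simpl in Hh; lra)) as Hinc.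
  assert (Hs : Rabs (dyadic_slope m (dyadic_index x m)) <= INR m).
  { rewrite dyadic_slope_index; pose proof (ones_count_bounds x m); apply Rabs_le; lra. }
  unfold takagi_ext_quot.
  set (L := log2 (1 / h)) in *; set (A := takagi_ext (x + h) - takagi_ext x) in *.
  set (s := dyadic_slope m (dyadic_index x m)) in *; set (r := INR (final_run x m)) in *.
  assert (1 <= INR m) by (apply (le_INR 1); auto).
  assert (0 <= r) by apply pos_INR.
  assert (Hh0 : 0 < h) by (pose proof (inv2_pow_pos (S m)); lra).
  assert (Hw : (/2) ^ m < 2 * h) by (simpl in Hh; lra).
  replace (A / (h * L) - s / INR m)
    with ((A - h * s) / (h * L) + s * (INR m - L) / (L * INR m)) by (field; lra).
  apply Rle_trans with ((2 * r + 4) / INR m + 1 / INR m); [|right; field; lra].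
  eapply Rle_trans; [apply Rabs_triang | apply Rplus_le_compat].
  - rewrite Rabs_div, (Rabs_pos_eq (h * L)) by nra; apply Rle_div_l; [nra|].
    apply Rle_trans with (h * (2 * r + 4)); [lra|].
    replace ((2 * r + 4) / INR m * (h * L)) with (h * (2 * r + 4) * (L / INR m))
      by (field; lra).
    rewrite <- (Rmult_1_r (h * (2 * r + 4))) at 1.
    apply Rmult_le_compat_l; [nra | apply Rle_div_r; lra].
  - rewrite Rabs_div, (Rabs_pos_eq (L * INR m)), Rabs_mult by nra.
    apply Rle_div_l; [nra|].
    assert (Rabs (INR m - L) <= 1) by (apply Rabs_le; lra).
    replace (1 / INR m * (L * INR m)) with L by (field; lra).
    apply Rle_trans with (INR m * 1); [apply Rmult_le_compat; auto using Rabs_pos | lra].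
Qed.

(* Increment landing in the middle of the next level-m dyadic interval. *)
Definition probe (m : nat) : R := right_end m - x + (/2) ^ S m.

Lemma probe_scaled m : 2 ^ m * (x + probe m) = IZR (dyadic_index x m) + 3 / 2.
Proof.
  unfold probe; replace (x + _) with (right_end m + /2 * (/2) ^ m) by (simpl; ring).
  rewrite Rmult_plus_distr_l, right_end_scaled, (Rmult_comm (/2)), <- Rmult_assoc,
    (Rmult_comm (2 ^ m)), inv2_pow_mul; field.
Qed.

Lemma probe_bounds m : bdigit (S m) x = 0%nat -> (/2) ^ m < probe m <= 3 / 2 * (/2) ^ m.
Proof.
  intros H0; rewrite bdigit_dyadic_index in H0.
  destruct (Z.odd (dyadic_index x (S m))) eqn:Hodd; [discriminate|].
  (* an even index at level m + 1 puts x in the left half of its level-m interval *)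
  pose proof (IZR_div2_odd (dyadic_index x (S m))) as Hdiv; rewrite Hodd, dyadic_index_div2 in Hdiv.
  pose proof (dyadic_index_bounds x (S m)) as HS; simpl pow in HS; rewrite Hdiv in HS.
  pose proof (probe_scaled m); pose proof (dyadic_index_bounds x m).
  pose proof (pow2_pos m); pose proof (inv2_pow_mul m).
  replace (probe m) with ((/2) ^ m * (2 ^ m * probe m))
    by (rewrite <- Rmult_assoc, inv2_pow_mul; ring).
  split; nra.
Qed.

Lemma final_run_le_at_probe m eta : (2 <= m)%nat -> bdigit (S m) x = 0%nat -> 0 <= eta ->
  takagi_ext_quot (probe m) <= -1 + eta -> INR (final_run x m) <= 4 + 2 * eta * INR m.
Proof.
  intros Hm H0 Heta HQ.
  pose proof (probe_bounds m H0) as Hh; pose proof (probe_scaled m) as Hsc.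
  set (h := probe m) in *; set (w := (/2) ^ m) in *.
  assert (Hw : 0 < w) by apply inv2_pow_pos.
  destruct m as [|m']; [lia|].
  assert (Hw' : (/2) ^ m' = 2 * w) by (unfold w; simpl; field).
  pose proof (log2_inv_bounds m' h ltac:(fold w; lra)) as HL.
  rewrite S_INR in *.
  assert (1 <= INR m') by (apply (le_INR 1); lia).
  pose proof (takagi_ext_increment_lower (S m') h ltac:(lra) ltac:(lra)) as Hlow.
  replace (x + h - right_end (S m')) with (w / 2) in Hlow
    by (unfold h, probe; simpl; unfold w; simpl; field).
  assert (Hs : - (INR m' + 1) <= dyadic_slope (S m') (dyadic_index x (S m'))).
  { rewrite dyadic_slope_index, S_INR; pose proof (ones_count_bounds x (S m')).
    rewrite S_INR in *; lra. }
  unfold takagi_ext_quot in HQ; fold h w in Hlow, HQ.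
  set (L := log2 (1 / h)) in *; set (r := INR (final_run x (S m'))) in *.
  assert (HhL : 0 < h * L) by nra.
  apply Rle_div_l in HQ; [|lra].
  assert (w * r <= 2 * w + h * (INR m' + 1 - L) + eta * h * L) by nra.
  assert (h * (INR m' + 1 - L) <= 3 / 2 * w) by nra.
  assert (eta * h * L <= eta * (3 / 2 * w) * (INR m' + 1)).
  { apply Rmult_le_compat; [nra | lra | apply Rmult_le_compat_l; lra | lra]. }
  apply (Rmult_le_reg_l w); [lra | nra].
Qed.

End Increments.

(** * Limits along dyadic scales *)

Lemma inv2_pow_bracket h : 0 < h <= 1 -> exists m, (/2) ^ S m < h <= (/2) ^ m.
Proof.
  intros Hh.
  destruct (pow_lt_1_zero (/2) ltac:(rewrite Rabs_pos_eq; lra) h ltac:(lra)) as [N HN].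
  specialize (HN N (le_n N)); rewrite Rabs_pos_eq in HN by (apply pow_le; lra).
  induction N as [|N IH]; [simpl in HN; lra|].
  destruct (Rle_dec h ((/2) ^ N)); [exists N; lra | apply IH; lra].
Qed.

Lemma inv2_pow_le_compat n k : (n <= k)%nat -> (/2) ^ k <= (/2) ^ n.
Proof.
  intros H; rewrite !pow_inv; apply Rinv_le_contravar;
    [apply pow2_pos | apply Rle_pow; [lra | exact H]].
Qed.

Lemma is_lim_seq_inv2_pow : is_lim_seq (fun n => (/2) ^ n) 0.
Proof. apply is_lim_seq_geom; rewrite Rabs_pos_eq; lra. Qed.

Lemma filterlim_at_right_0_dyadic (f : R -> R) (l : R) (e : nat -> R) :
  is_lim_seq e 0 ->
  (forall m h, (1 <= m)%nat -> (/2) ^ S m < h <= (/2) ^ m -> Rabs (f h - l) <= e m) ->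
  filterlim f (at_right 0) (locally l).
Proof.
  intros He Hf; apply filterlim_locally; intros eps.
  apply is_lim_seq_spec in He; destruct (He eps) as [N HN].
  set (M := max N 1).
  exists (mkposreal _ (inv2_pow_pos M)); intros h Hball Hh0.
  change (Rabs (h - 0) < (/2) ^ M) in Hball; rewrite Rminus_0_r, Rabs_pos_eq in Hball by lra.
  pose proof (inv2_pow_le_compat 0 M ltac:(lia)).
  destruct (inv2_pow_bracket h ltac:(simpl in *; lra)) as [m Hm].
  assert (HMm : (M <= m)%nat).
  { destruct (le_lt_dec M m) as [|Hlt]; [assumption|].
    pose proof (inv2_pow_le_compat (S m) M Hlt); lra. }
  specialize (HN m ltac:(lia)); rewrite Rminus_0_r in HN.
  change (Rabs (f h - l) < eps).
  apply Rle_lt_trans with (e m); [exact (Hf m h ltac:(lia) Hm)|].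
  eapply Rle_lt_trans; [apply Rle_abs | exact HN].
Qed.

Lemma is_lim_seq_filterlim_at_right_0 (f : R -> R) (l : R) (u : nat -> R) :
  filterlim f (at_right 0) (locally l) -> (forall n, 0 < u n) -> is_lim_seq u 0 ->
  is_lim_seq (fun n => f (u n)) l.
Proof.
  intros Hf Hpos Hu; eapply filterlim_comp; [|exact Hf].
  intros P [eps HP]; apply is_lim_seq_spec in Hu; destruct (Hu eps) as [N HN].
  exists N; intros n Hn; apply HP; [exact (HN n Hn) | apply Hpos].
Qed.

(* k n -> oo because k n >= u (k n) = u n, so u (k n) / k n -> c as well, and
   k n / n = (u n / n) / (u (k n) / k n). *)
Lemma is_lim_seq_ratio_of_level (u : nat -> R) (c : R) (k : nat -> nat) :
  0 < c -> is_lim_seq (fun n => u n / INR n) c -> (forall n, u n <= INR n) ->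
  (forall n, u (k n) = u n) ->
  is_lim_seq (fun n => INR (k n) / INR n) 1.
Proof.
  intros Hc Hu Hle Hlevel.
  assert (Hgrowth : eventually (fun n => c / 2 * INR n < u n /\ 0 < INR n)).
  { apply is_lim_seq_spec in Hu.
    destruct (Hu (mkposreal _ (Rdiv_lt_0_compat c 2 Hc Rlt_0_2))) as [N HN].
    exists (max N 1); intros n Hn; specialize (HN n ltac:(lia)); simpl in HN.
    assert (0 < INR n) by (apply lt_0_INR; lia).
    apply Rabs_def2 in HN; split; [apply Rlt_div_r; lra | assumption]. }
  assert (Hk_inf : filterlim k eventually eventually).
  { intros P [N HP]; destruct Hgrowth as [N0 H0].
    destruct (INR_unbounded (2 * INR N / c)) as [N1 HN1].
    exists (max N0 N1); intros n Hn; apply HP, INR_le.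
    destruct (H0 n ltac:(lia)) as [Hun _]; rewrite <- Hlevel in Hun.
    specialize (Hle (k n)); apply Rlt_div_l in HN1; [|lra].
    assert (INR N1 <= INR n) by (apply le_INR; lia).
    nra. }
  apply is_lim_seq_ext_loc with (fun n => (u n / INR n) / (u (k n) / INR (k n))).
  - destruct Hgrowth as [N0 H0]; exists N0; intros n Hn.
    destruct (H0 n Hn) as [Hun Hn0]; specialize (Hle (k n)); rewrite Hlevel in Hle |- *.
    field; repeat split; nra.
  - replace 1 with (c / c) by (field; lra).
    apply is_lim_seq_div'; [exact Hu | exact (is_lim_seq_subseq _ _ k Hk_inf Hu) | lra].
Qed.

Lemma is_lim_seq_div_INR a : is_lim_seq (fun n => a / INR n) 0.
Proof.
  replace 0 with (a * 0) by ring; apply is_lim_seq_mult'; [apply is_lim_seq_const|].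
  change (Finite 0) with (Rbar_inv p_infty).
  apply is_lim_seq_inv; [apply is_lim_seq_INR | discriminate].
Qed.

(** * The limit of the difference quotient *)

Section Limits.

Variable x : R.

Lemma filterlim_takagi_quot_ext (l : R) : 0 <= x < 1 ->
  filterlim (takagi_quot x) (at_right 0) (locally l) <->
  filterlim (takagi_ext_quot x) (at_right 0) (locally l).
Proof.
  intros Hx.
  assert (Hnear : at_right 0 (fun h => takagi_quot x h = takagi_ext_quot x h)).
  { exists (mkposreal (1 - x) ltac:(lra)); intros h Hball Hh.
    change (Rabs (h - 0) < 1 - x) in Hball; rewrite Rminus_0_r, Rabs_pos_eq in Hball by lra.
    unfold takagi_quot, takagi_ext_quot; rewrite !Takagi_eq_takagi_ext, Rabs_pos_eq by lra.
    reflexivity. }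
  split; apply filterlim_ext_loc; [exact Hnear|].
  eapply filter_imp; [|exact Hnear]; intros h ->; reflexivity.
Qed.

Lemma ones_count_ratio_lim (d1 : R) : is_lim_seq (fun n => digit_avg x (S n)) d1 ->
  is_lim_seq (fun m => ones_count x m / INR m) d1.
Proof.
  intros Hd; apply is_lim_seq_incr_1.
  apply (is_lim_seq_ext _ _ _ (digit_avg_ones_count x)), Hd.
Qed.

Lemma slope_ratio_lim (d1 : R) : is_lim_seq (fun m => ones_count x m / INR m) d1 ->
  is_lim_seq (fun m => dyadic_slope m (dyadic_index x m) / INR m) (1 - d1 - d1).
Proof.
  intros Hd; apply is_lim_seq_ext_loc with (fun m => 1 - 2 * (ones_count x m / INR m)).
  - exists 1%nat; intros m Hm; assert (0 < INR m) by (apply lt_0_INR; lia).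
    rewrite dyadic_slope_index; field; lra.
  - replace (1 - d1 - d1) with (1 - 2 * d1) by ring.
    apply is_lim_seq_minus'; [apply is_lim_seq_const | apply is_lim_seq_scal_l with (lu := d1), Hd].
Qed.

Lemma takagi_ext_quot_lim (l : R) :
  is_lim_seq (fun m => dyadic_slope m (dyadic_index x m) / INR m) l ->
  is_lim_seq (fun m => INR (final_run x m) / INR m) 0 ->
  filterlim (takagi_ext_quot x) (at_right 0) (locally l).
Proof.
  intros Hslope Hrun.
  apply filterlim_at_right_0_dyadic with (fun m =>
    Rabs (dyadic_slope m (dyadic_index x m) / INR m - l)
    + 2 * (INR (final_run x m) / INR m) + 5 / INR m).
  - replace 0 with (0 + 2 * 0 + 0) by ring.
    apply is_lim_seq_plus'; [apply is_lim_seq_plus'|apply is_lim_seq_div_INR].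
    + apply (is_lim_seq_abs_0 (fun m => dyadic_slope m (dyadic_index x m) / INR m - l)).
      replace 0 with (l - l) by ring.
      apply is_lim_seq_minus'; [exact Hslope | apply is_lim_seq_const].
    + apply is_lim_seq_scal_l with (lu := 0), Hrun.
  - intros m h Hm Hh; pose proof (takagi_ext_quot_approx x m h Hm Hh).
    assert (0 < INR m) by (apply lt_0_INR; lia).
    replace (takagi_ext_quot x h - l) with
      ((takagi_ext_quot x h - dyadic_slope m (dyadic_index x m) / INR m)
       + (dyadic_slope m (dyadic_index x m) / INR m - l)) by ring.
    eapply Rle_trans; [apply Rabs_triang|].
    apply Rle_trans with ((2 * INR (final_run x m) + 5) / INR m
      + Rabs (dyadic_slope m (dyadic_index x m) / INR m - l)); [lra | right; field; lra].
Qed.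

Lemma final_run_ratio_lim_of_density (d1 : R) : d1 < 1 ->
  is_lim_seq (fun m => ones_count x m / INR m) d1 ->
  is_lim_seq (fun m => INR (final_run x m) / INR m) 0.
Proof.
  intros Hd1 Hd.
  (* the number of zero digits does not change along the final run of ones *)
  assert (Hk := is_lim_seq_ratio_of_level (fun m => INR m - ones_count x m) (1 - d1)
                  (fun m => m - final_run x m)%nat ltac:(lra)).
  apply is_lim_seq_ext_loc with (fun m => 1 - INR (m - final_run x m) / INR m).
  - exists 1%nat; intros m Hm; assert (0 < INR m) by (apply lt_0_INR; lia).
    rewrite minus_INR by apply final_run_le; field; lra.
  - replace 0 with (1 - 1) by ring; apply is_lim_seq_minus'; [apply is_lim_seq_const|].
    apply Hk.
    + apply is_lim_seq_ext_loc with (fun m => 1 - ones_count x m / INR m).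
      * exists 1%nat; intros m Hm; assert (0 < INR m) by (apply lt_0_INR; lia); field; lra.
      * apply is_lim_seq_minus'; [apply is_lim_seq_const | exact Hd].
    + intros m; pose proof (ones_count_bounds x m); lra.
    + intros m; rewrite (ones_count_final_run x m).
      rewrite minus_INR by apply final_run_le; ring.
Qed.

End Limits.

Section Gaps.

Variable x : R.
Variable b : nat -> nat.
Hypothesis b_incr : forall n, (b n < b (S n))%nat.
Hypothesis b_zeros : forall k, (1 <= k)%nat -> (bdigit k x = 0%nat <-> exists n, b n = k).
Hypothesis b_pos : forall n, (1 <= b n)%nat.

Lemma b_lt n n' : (n < n')%nat -> (b n < b n')%nat.
Proof. induction 1 as [|n' _ IH]; [apply b_incr | specialize (b_incr n'); lia]. Qed.

Lemma b_le n n' : (n <= n')%nat -> (b n <= b n')%nat.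
Proof. intros H; destruct (Nat.eq_dec n n') as [->|]; [lia | pose proof (b_lt n n'); lia]. Qed.

Lemma b_ge_index n : (n <= b n)%nat.
Proof. induction n; [lia | specialize (b_incr n); lia]. Qed.

Lemma filterlim_b : filterlim b eventually eventually.
Proof. intros P [N HP]; exists N; intros n Hn; apply HP; pose proof (b_ge_index n); lia. Qed.

Lemma bdigit_b n : bdigit (b n) x = 0%nat.
Proof. apply (b_zeros _ (b_pos n)); exists n; reflexivity. Qed.

Lemma final_run_b n : final_run x (b n) = 0%nat.
Proof.
  pose proof (final_run_after_zero x (b n) (b n) (bdigit_b n) ltac:(pose proof (b_pos n); lia)).
  lia.
Qed.

Lemma final_run_between m : (b 0 <= m)%nat ->
  exists j, (m - final_run x m)%nat = b j /\ (m < b (S j))%nat.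
Proof.
  intros Hm.
  pose proof (final_run_after_zero x (b 0) m (bdigit_b 0) ltac:(pose proof (b_pos 0); lia)).
  pose proof (b_pos 0).
  destruct (proj1 (b_zeros (m - final_run x m) ltac:(lia))
             (bdigit_before_final_run x m ltac:(lia))) as [j Hj].
  exists j; split; [symmetry; exact Hj|].
  destruct (le_lt_dec (b (S j)) m) as [Hle|]; [exfalso|assumption].
  pose proof (final_run_after_zero x (b (S j)) m (bdigit_b (S j))
                ltac:(pose proof (b_pos (S j)); lia)).
  specialize (b_incr j); lia.
Qed.

Lemma final_run_ratio_lim_of_gaps :
  is_lim_seq (fun n => INR (b (S n)) / INR (b n)) 1 ->
  is_lim_seq (fun m => INR (final_run x m) / INR m) 0.
Proof.
  intros Hr; apply is_lim_seq_spec in Hr; apply is_lim_seq_spec; intros eps.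
  destruct (Hr eps) as [J HJ]; exists (b J); intros m Hm.
  destruct (final_run_between m ltac:(pose proof (b_le 0 J); lia)) as [j [Hj Hmj]].
  assert (HJj : (J <= j)%nat).
  { destruct (le_lt_dec J j) as [|Hlt]; [assumption|].
    pose proof (b_le (S j) J Hlt); lia. }
  specialize (HJ j HJj); apply Rabs_def2 in HJ; destruct HJ as [HJ _].
  pose proof (b_pos j); assert (Hbj : 1 <= INR (b j)) by (apply (le_INR 1); lia).
  assert (HJ' : INR (b (S j)) < (1 + eps) * INR (b j))
    by (apply Rlt_div_l; lra).
  pose proof (final_run_le x m).
  assert (Hrun : INR (final_run x m) = INR m - INR (b j))
    by (rewrite <- Hj, minus_INR by assumption; ring).
  assert (INR m + 1 <= INR (b (S j))) by (rewrite <- S_INR; apply le_INR; lia).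
  assert (INR (b j) <= INR m) by (apply le_INR; lia).
  rewrite Rminus_0_r, Rabs_pos_eq by (apply Rdiv_le_0_compat; [apply pos_INR | lra]).
  apply Rlt_div_l; [lra|]; rewrite Hrun.
  nra.
Qed.

Lemma takagi_ext_quot_lim_unique (L l : R) :
  is_lim_seq (fun m => dyadic_slope m (dyadic_index x m) / INR m) L ->
  filterlim (takagi_ext_quot x) (at_right 0) (locally l) -> l = L.
Proof.
  intros Hslope Hf.
  set (s := fun n => dyadic_slope (b n) (dyadic_index x (b n)) / INR (b n)).
  assert (Hq : is_lim_seq (fun n => takagi_ext_quot x ((/2) ^ b n)) l).
  { apply is_lim_seq_filterlim_at_right_0; [exact Hf | intros; apply inv2_pow_pos |].
    exact (is_lim_seq_subseq _ _ b filterlim_b is_lim_seq_inv2_pow). }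
  (* at h = 2^-b_n the final run is empty, so the quotient is within 5/b_n of s n *)
  assert (Hq' : is_lim_seq (fun n => takagi_ext_quot x ((/2) ^ b n)) L).
  { apply is_lim_seq_le_le with (fun n => s n - 5 / INR (b n)) (fun n => s n + 5 / INR (b n)).
    - intros n; apply Rabs_le_between'.
      pose proof (takagi_ext_quot_approx x (b n) ((/2) ^ b n) (b_pos n)) as Happrox.
      rewrite final_run_b in Happrox; simpl INR in Happrox.
      replace (2 * 0 + 5) with 5 in Happrox by ring.
      apply Happrox; simpl; pose proof (inv2_pow_pos (b n)); lra.
    - replace L with (L - 0) by ring; apply is_lim_seq_minus';
        [exact (is_lim_seq_subseq _ _ b filterlim_b Hslope)
        | exact (is_lim_seq_subseq _ _ b filterlim_b (is_lim_seq_div_INR 5))].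
    - replace L with (L + 0) by ring; apply is_lim_seq_plus';
        [exact (is_lim_seq_subseq _ _ b filterlim_b Hslope)
        | exact (is_lim_seq_subseq _ _ b filterlim_b (is_lim_seq_div_INR 5))]. }
  apply is_lim_seq_unique in Hq; apply is_lim_seq_unique in Hq'.
  rewrite Hq in Hq'; injection Hq'; auto.
Qed.

Lemma gap_le_at_probe j eta : 0 <= eta -> (3 <= b (S j))%nat ->
  takagi_ext_quot x (probe x (b (S j) - 1)) <= -1 + eta ->
  INR (b (S j)) <= INR (b j) + 5 + 2 * eta * INR (b (S j)).
Proof.
  intros Heta Hj HQ; set (m := (b (S j) - 1)%nat) in *.
  assert (HSm : S m = b (S j)) by (unfold m; lia).
  pose proof (final_run_le_at_probe x m eta ltac:(lia) ltac:(rewrite HSm; apply bdigit_b)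
                Heta HQ) as Hrun.
  assert (Hbj : (b j <= m)%nat) by (specialize (b_incr j); lia).
  assert (Hones : (m - b j <= final_run x m)%nat).
  { apply final_run_of_ones; [assumption|].
    intros i Hi; destruct (bdigit_0_or_1 x i) as [Hz|]; [exfalso | assumption].
    destruct (proj1 (b_zeros i ltac:(pose proof (b_pos j); lia)) Hz) as [n <-].
    (* no value of b lies strictly between b j and b (S j) *)
    destruct (lt_eq_lt_dec n j) as [[Hlt| ->]|Hgt];
      [pose proof (b_lt n j Hlt) | | pose proof (b_le (S j) n Hgt)]; lia. }
  apply le_INR in Hones; rewrite minus_INR in Hones by assumption.
  rewrite <- HSm, S_INR in *.
  assert (0 <= eta * INR m) by (apply Rmult_le_pos; [lra | apply pos_INR]).
  lra.
Qed.

Lemma gap_ratio_lim_of_quot :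
  filterlim (takagi_ext_quot x) (at_right 0) (locally (-1)) ->
  is_lim_seq (fun n => INR (b (S n)) / INR (b n)) 1.
Proof.
  intros Hf.
  set (h := fun j => probe x (b (S j) - 1)).
  assert (Hh : forall j, (/2) ^ (b (S j) - 1) < h j <= 3 / 2 * (/2) ^ (b (S j) - 1)).
  { intros j; apply probe_bounds.
    replace (S (b (S j) - 1)) with (b (S j)) by (pose proof (b_pos (S j)); lia).
    apply bdigit_b. }
  assert (Hq : is_lim_seq (fun j => takagi_ext_quot x (h j)) (-1)).
  { apply is_lim_seq_filterlim_at_right_0;
      [exact Hf | intros j; specialize (Hh j); pose proof (inv2_pow_pos (b (S j) - 1)); lra |].
    apply is_lim_seq_le_le with (fun _ => 0) (fun j => 3 / 2 * (/2) ^ (b (S j) - 1)).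
    - intros j; specialize (Hh j); pose proof (inv2_pow_pos (b (S j) - 1)); lra.
    - apply is_lim_seq_const.
    - replace 0 with (3 / 2 * 0) by ring; apply is_lim_seq_mult'; [apply is_lim_seq_const|].
      apply (is_lim_seq_subseq _ _ (fun j => b (S j) - 1)%nat); [|exact is_lim_seq_inv2_pow].
      intros P [N HP]; exists N; intros n Hn; apply HP; pose proof (b_ge_index (S n)); lia. }
  set (eta := fun j => Rmax 0 (takagi_ext_quot x (h j) + 1)).
  assert (Heta : is_lim_seq eta 0).
  { apply is_lim_seq_le_le with (fun _ => 0) (fun j => Rabs (takagi_ext_quot x (h j) + 1)).
    - intros j; split; [apply Rmax_l | apply Rmax_lub; [apply Rabs_pos | apply Rle_abs]].
    - apply is_lim_seq_const.
    - apply (is_lim_seq_abs_0 (fun j => takagi_ext_quot x (h j) + 1)).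
      replace 0 with (-1 + 1) by ring.
      apply is_lim_seq_plus'; [exact Hq | apply is_lim_seq_const]. }
  apply is_lim_seq_le_le_loc with (fun _ => 1) (fun j => (1 + 5 / INR (b j)) / (1 - 2 * eta j)).
  - apply is_lim_seq_spec in Heta; destruct (Heta (mkposreal (/4) ltac:(lra))) as [N HN].
    exists (max N 2); intros j Hj; specialize (HN j ltac:(lia)); simpl in HN.
    rewrite Rminus_0_r, Rabs_pos_eq in HN by apply Rmax_l.
    pose proof (b_pos j); assert (Hbj : 1 <= INR (b j)) by (apply (le_INR 1); lia).
    assert (Hlt : INR (b j) < INR (b (S j))) by (apply lt_INR, b_incr).
    split; [apply Rle_div_r; lra|].
    pose proof (gap_le_at_probe j (eta j) (Rmax_l _ _)
                  ltac:(pose proof (b_ge_index (S j)); lia)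
                  ltac:(pose proof (Rmax_r 0 (takagi_ext_quot x (h j) + 1)); unfold eta, h in *;
                        lra)).
    replace ((1 + 5 / INR (b j)) / (1 - 2 * eta j))
      with ((INR (b j) + 5) / (INR (b j) * (1 - 2 * eta j))) by (field; lra).
    apply (Rle_div_r _ _ (INR (b j) * (1 - 2 * eta j))); [apply Rmult_lt_0_compat; lra|].
    replace (INR (b (S j)) / INR (b j) * (INR (b j) * (1 - 2 * eta j)))
      with (INR (b (S j)) * (1 - 2 * eta j)) by (field; lra).
    lra.
  - apply is_lim_seq_const.
  - replace 1 with ((1 + 0) / (1 - 2 * 0)) at 1 by field.
    apply is_lim_seq_div'; [| | lra].
    + apply is_lim_seq_plus'; [apply is_lim_seq_const|].
      exact (is_lim_seq_subseq _ _ b filterlim_b (is_lim_seq_div_INR 5)).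
    + apply is_lim_seq_minus'; [apply is_lim_seq_const|].
      apply is_lim_seq_mult'; [apply is_lim_seq_const | exact Heta].
Qed.

End Gaps.

Theorem lemma3 (x d1 : R) (hx0 : 0 <= x) (hx1 : x < 1)
  (hd1 : is_lim_seq (fun n => digit_avg x (S n)) d1) :
  (d1 < 1 ->
     filterlim (takagi_quot x) (at_right 0) (locally ((1 - d1) - d1))) /\
  (d1 = 1 ->
     forall b : nat -> nat,
       (forall n, (b n < b (S n))%nat) ->
       (forall k : nat, (1 <= k)%nat ->
          (bdigit k x = 0%nat <-> exists n, b n = k)) ->
       (forall n, (1 <= b n)%nat) ->
       ((exists l : R, filterlim (takagi_quot x) (at_right 0) (locally l)) <->
          is_lim_seq (fun n => INR (b (S n)) / INR (b n)) 1) /\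
       (forall l : R, filterlim (takagi_quot x) (at_right 0) (locally l) ->
          l = -1)).
Proof.
  assert (Hx : 0 <= x < 1) by lra.
  pose proof (ones_count_ratio_lim x d1 hd1) as Hones.
  pose proof (slope_ratio_lim x d1 Hones) as Hslope.
  split.
  - intros Hd1; apply filterlim_takagi_quot_ext; [exact Hx|].
    exact (takagi_ext_quot_lim x _ Hslope (final_run_ratio_lim_of_density x d1 Hd1 Hones)).
  - intros -> b Hb Hbd Hb1.
    replace (1 - 1 - 1) with (-1) in Hslope by ring.
    assert (Hunique : forall l, filterlim (takagi_quot x) (at_right 0) (locally l) -> l = -1).
    { intros l Hl; apply filterlim_takagi_quot_ext in Hl; [|exact Hx].
      exact (takagi_ext_quot_lim_unique x b Hb Hbd Hb1 _ _ Hslope Hl). }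
    split; [split | exact Hunique].
    + intros [l Hl]; pose proof Hl as Hl'; rewrite (Hunique l Hl) in Hl'.
      apply filterlim_takagi_quot_ext in Hl'; [|exact Hx].
      exact (gap_ratio_lim_of_quot x b Hb Hbd Hb1 Hl').
    + intros Hgap; exists (-1); apply filterlim_takagi_quot_ext; [exact Hx|].
      exact (takagi_ext_quot_lim x _ Hslope (final_run_ratio_lim_of_gaps x b Hb Hbd Hb1 Hgap)).
Qed.
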